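(* Let $\Gamma$ be a countable discrete group and $\mu$ a probability measure on $\Gamma$ with $\mu(e)>0$. If $0\neq T\in\mathcal B(\ell^2(\Gamma))$ and $\lambda\in\mathbb T$ satisfy $\mathcal P_\mu(T)=\lambda T$, then $\lambda=1$.
   Context: $\rho$ denotes the right regular representation of $\Gamma$ on $\ell^2(\Gamma)$, $\rho_g\delta_x=\delta_{xg^{-1}}$. The Markov operator $\mathcal P_\mu:\mathcal B(\ell^2(\Gamma))\to\mathcal B(\ell^2(\Gamma))$ is $\mathcal P_\mu(T)=\sum_{g\in\Gamma}\mu(g)\rho_gT\rho_g^*$. *)

From HB Require Import structures.
From mathcomp Require Import all_boot all_order all_algebra.
From mathcomp Require Import reals.
From mathcomp Require Import complex.

Set Implicit Arguments.
Unset Strict Implicit.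
Unset Printing Implicit Defensive.
Import Order.TTheory GRing.Theory Num.Theory.
Local Open Scope ring_scope.

(* Unconditional (net) convergence of a family indexed by an arbitrary
   eqType: s = \sum_{g} c g  in the sense of finite partial sums. *)
Definition hasSum (G : eqType) (V : numDomainType) (c : G -> V) (s : V) : Prop :=
  forall e : V, 0 < e ->
    exists F0 : seq G, forall F : seq G, uniq F -> {subset F0 <= F} ->
      `|\sum_(g <- F) c g - s| < e.

Definition l2 (G : eqType) (R : realType) (f : G -> R[i]) : Prop :=
  exists M : R[i], forall F : seq G, uniq F -> \sum_(g <- F) `|f g| ^+ 2 <= M.

(* B(ell^2(G)): a map on functions that is linear and bounded on ell^2.
   (Two such maps denote the same operator iff they agree on ell^2.) *)
Definition bounded_op (G : eqType) (R : realType)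
    (T : (G -> R[i]) -> (G -> R[i])) : Prop :=
  (forall (a : R[i]) (f h : G -> R[i]), l2 f -> l2 h ->
      T (fun x => a * f x + h x) = (fun x => a * T f x + T h x)) /\
  (exists K : R[i], forall (f : G -> R[i]) (M : R[i]),
      (forall F : seq G, uniq F -> \sum_(g <- F) `|f g| ^+ 2 <= M) ->
      forall F : seq G, uniq F -> \sum_(g <- F) `|T f g| ^+ 2 <= K * M).

(* right regular representation: rho_g delta_x = delta_{x g^-1},
   i.e. (rho_g f)(y) = f (y g); rho_g^* = rho_{g^-1}. *)
Definition rho (G : groupType) (R : realType) (g : G) (f : G -> R[i]) : G -> R[i] :=
  fun y => f (y * g)%g.

(* "P_mu(T) = S" : S is the operator sum_g mu(g) rho_g T rho_g^*, the series
   being evaluated (it converges in norm) on every vector of ell^2, coordinatewise. *)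
Definition markov_eq (G : groupType) (R : realType) (mu : G -> R)
    (T S : (G -> R[i]) -> (G -> R[i])) : Prop :=
  forall f : G -> R[i], l2 f -> forall x : G,
    hasSum (fun g : G => (mu g)%:C%C * rho g (T (rho (g^-1)%g f)) x) (S f x).

Definition op_is_zero (G : eqType) (R : realType) (T : (G -> R[i]) -> (G -> R[i])) : Prop :=
  forall f : G -> R[i], l2 f -> T f = (fun _ => 0).

From HB Require Import structures.
From mathcomp Require Import all_boot all_order all_algebra.
From mathcomp Require Import reals complex.
From mathcomp Require Import boolp classical_sets.
From mathcomp Require Import lra.

(* Let N be the supremum of the moduli |(T f)(x)| over the unit ball of
   l^2(G) and the points x of G: it is finite because T is bounded and
   positive because T <> 0.  Since each rho_g preserves the unit ball, every
   term of the series  (P_mu(T) f)(x) = lambda (T f)(x)  of index g <> e has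
   modulus at most mu(g) N, while the term of index e is mu(e) (T f)(x).
   Isolating it yields  |lambda - mu(e)| |(T f)(x)| <= (1 - mu(e)) N, and
   taking the supremum,  |lambda - mu(e)| <= 1 - mu(e).  Finally, the only
   point of the unit circle in the closed disc of center a > 0 and radius
   1 - a is 1. *)

Set Implicit Arguments.
Unset Strict Implicit.
Unset Printing Implicit Defensive.

Import Order.TTheory GRing.Theory Num.Theory Normc.
Local Open Scope ring_scope.
Local Open Scope complex_scope.

Section ComplexFacts.
Context {R : rcfType}.

Lemma norm_normc (z : R[i]) : `|z| = (normc z)%:C.
Proof. by case: z. Qed.

Lemma normc_ge0 (z : R[i]) : 0 <= normc z.
Proof. by rewrite -ler0c -norm_normc. Qed.

Lemma unit_circle_disc_eq1 (a : R) (lambda : R[i]) : 0 < a ->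
  `|lambda| = 1 -> `|lambda - a%:C| <= (1 - a)%:C -> lambda = 1.
Proof.
case: lambda => u v a_gt0 /(congr1 (fun z => z ^+ 2)).
rewrite expr1n -add_Re2_Im2 /= => /complexI uv1 dist_le.
have a_le1 : 0 <= 1 - a by rewrite -ler0c (le_trans _ dist_le).
have : (u - a) ^+ 2 + v ^+ 2 <= (1 - a) ^+ 2.
  move: dist_le; rewrite norm_normc lecR /= subr0.
  by rewrite -[X in _ <= X](ger0_norm a_le1) -sqrtr_sqr ler_sqrt ?sqr_ge0.
move=> sq_le; have u1 : u = 1 by nra.
have v0 : v = 0 by nra.
by rewrite u1 v0.
Qed.

End ComplexFacts.

Section SeriesTail.
Variables (R : rcfType) (G : eqType).

Lemma hasSum_remainder_bound (c : G -> R[i]) (w : G -> R) (s : R[i]) (t N : R)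
    (g0 : G) :
  hasSum c s -> hasSum w t -> 0 <= N ->
  (forall g, g != g0 -> `|c g| <= (w g * N)%:C) ->
  `|s - c g0| <= ((t - w g0) * N)%:C.
Proof.
move=> sum_c sum_w N_ge0 c_le; rewrite norm_normc lecR.
apply/ler_addgt0Pr => e e_gt0; pose e' := e / (1 + N).
have e'_gt0 : 0 < e' by rewrite divr_gt0 //; lra.
have [F0 F0_ok] := sum_c e'%:C ltac:(by rewrite ltcR).
have [F1 F1_ok] := sum_w e' e'_gt0.
pose F := undup (g0 :: F0 ++ F1).
have F_uniq : uniq F := undup_uniq _.
have g0F : g0 \in F by rewrite mem_undup inE eqxx.
have /(F0_ok F F_uniq) : {subset F0 <= F}.
  by move=> g gF0; rewrite mem_undup inE mem_cat gF0 orbT.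
have /(F1_ok F F_uniq) : {subset F1 <= F}.
  by move=> g gF1; rewrite mem_undup inE mem_cat gF1 !orbT.
rewrite !(bigD1_seq g0) //=.
set cF := \sum_(g <- F | g != g0) c g; set wF := \sum_(g <- F | g != g0) w g.
move=> /ltr_distlDr wF_le /ltW cF_near.
have cF_le : `|cF| <= (wF * N)%:C.
  rewrite /wF mulr_suml rmorph_sum; apply: le_trans (ler_norm_sum _ _ _) _.
  exact: ler_sum.
have : `|s - c g0| <= e'%:C + (wF * N)%:C.
  have -> : s - c g0 = (s - (c g0 + cF)) + cF by rewrite opprD addrA subrK.
  by apply: le_trans (ler_normD _ _) _; rewrite distrC lerD.
rewrite norm_normc -rmorphD lecR => /le_trans; apply.
have -> : e = e' * (1 + N) by rewrite divfK // gt_eqF //; lra.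
have : wF * N <= (t + e' - w g0) * N by rewrite ler_wpM2r //; lra.
nra.
Qed.

End SeriesTail.

Lemma scaled_sup_le (R : realType) (E : set R) (d c : R) :
  (exists r, E r) -> 0 <= d -> (forall r, E r -> d * r <= c) -> d * sup E <= c.
Proof.
move=> [r0 Er0] d_ge0 dE_le; have [d0 | d_gt0] := eqVneq d 0.
  by rewrite d0 mul0r; apply: le_trans (dE_le r0 Er0); rewrite d0 mul0r.
have {d_ge0}d_gt0 : 0 < d by rewrite lt_neqAle eq_sym d_gt0.
rewrite mulrC -ler_pdivlMr //; apply: ge_sup; first by exists r0.
by move=> r Er; rewrite ler_pdivlMr // mulrC dE_le.
Qed.

Section BoundedOperators.
Variables (R : realType) (G : eqType).
Implicit Types (f : G -> R[i]) (T : (G -> R[i]) -> (G -> R[i])).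

Definition unit_ball f : Prop :=
  forall F : seq G, uniq F -> \sum_(g <- F) `|f g| ^+ 2 <= 1.

Lemma unit_ball_l2 f : unit_ball f -> l2 f.
Proof. by move=> f1; exists 1. Qed.

Lemma l2_zero : l2 (fun _ : G => 0 : R[i]).
Proof. by exists 0 => F _; rewrite big1 // => g _; rewrite normr0 expr0n. Qed.

Lemma bounded_op_zero T : bounded_op T -> T (fun _ => 0) = (fun _ => 0).
Proof.
case=> lin _; have := lin 1 _ _ l2_zero l2_zero.
have -> : (fun x : G => 1 * 0 + 0) = (fun _ => 0 : R[i]).
  by apply: funext => x; rewrite mul1r addr0.
move=> T0E; apply: funext => x.
have := congr1 (fun h => h x) T0E; rewrite /= mul1r => T0x.
by apply: (@addrI _ (T (fun _ => 0) x)); rewrite addr0 -T0x.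
Qed.

Lemma bounded_opZ T (a : R[i]) f : bounded_op T -> l2 f ->
  T (fun x => a * f x) = (fun x => a * T f x).
Proof.
move=> T_bdd lf; have := T_bdd.1 a _ _ lf l2_zero.
rewrite bounded_op_zero //.
have -> : (fun x : G => a * f x + 0) = (fun x => a * f x).
  by apply: funext => x; rewrite addr0.
by move=> ->; apply: funext => x; rewrite addr0.
Qed.

Lemma bounded_op_coord_bound {T} : bounded_op T ->
  exists B : R, forall f, unit_ball f -> forall x, normc (T f x) <= B.
Proof.
case=> _ [K K_bound]; exists (1 + complex.Re K) => f f1 x.
have := K_bound f 1 f1 [:: x] isT.
rewrite big_seq1 mulr1 norm_normc -rmorphXn lecE => /andP[_ /= sq_le].
by have := normc_ge0 (T f x); nra.
Qed.

Lemma l2_scale_unit_ball {f} : l2 f ->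
  exists2 c : R, 0 < c & unit_ball (fun x => c%:C * f x).
Proof.
move=> [M M_bound].
have M_ge0 : 0 <= M by have := M_bound [::] isT; rewrite big_nil.
have M_real : M = (normc M)%:C by rewrite -norm_normc ger0_norm.
set m := normc M in M_real; have m_ge0 : 0 <= m := normc_ge0 M.
have c_gt0 : 0 < (1 + m)^-1 by rewrite invr_gt0; lra.
exists (1 + m)^-1 => // F F_uniq.
under eq_bigr do rewrite normrM exprMn ger0_norm ?ler0c ?ltW //.
rewrite -mulr_sumr; apply: le_trans (ler_wpM2l _ (M_bound F F_uniq)) _.
  by rewrite exprn_ge0 // ler0c ltW.
rewrite M_real -rmorphXn -rmorphM lecR exprVn.
by rewrite mulrC ler_pdivrMr ?exprn_gt0 //; nra.
Qed.

Lemma nonzero_op_witness {T} : bounded_op T -> ~ op_is_zero T ->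
  exists f x, unit_ball f /\ 0 < normc (T f x).
Proof.
move=> T_bdd /existsNP [f /not_implyP [lf Tf_ne0]].
have /existsNP [x /eqP Tfx_ne0] : ~ forall x, T f x = 0.
  by move=> Tf0; apply: Tf_ne0; apply: funext.
have [c c_gt0 cf_unit] := l2_scale_unit_ball lf.
exists (fun y => c%:C * f y), x; split => //.
have cC_gt0 : 0 < c%:C by rewrite ltcR.
rewrite -ltcR -norm_normc bounded_opZ // normrM.
by rewrite mulr_gt0 // normr_gt0 ?Tfx_ne0 ?gt_eqF.
Qed.

(* The moduli of the coordinates [(T f)(x)], [f] in the unit ball, and their
   supremum: a norm of [T] adapted to coordinatewise estimates. *)
Definition coord_values T : set R :=
  fun r => exists f x, unit_ball f /\ r = normc (T f x).

Definition coord_sup T : R := sup (coord_values T).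

Lemma coord_le_sup {T f} x : bounded_op T -> unit_ball f ->
  normc (T f x) <= coord_sup T.
Proof.
move=> /bounded_op_coord_bound [B B_bound] f_unit; apply: ub_le_sup.
- by exists B => _ [h [y [h_unit ->]]]; exact: B_bound.
- by exists f, x.
Qed.

Lemma coord_sup_gt0 T : bounded_op T -> ~ op_is_zero T -> 0 < coord_sup T.
Proof.
move=> T_bdd /(nonzero_op_witness T_bdd) [f [x [f_unit Tfx_gt0]]].
exact: lt_le_trans Tfx_gt0 (coord_le_sup x T_bdd f_unit).
Qed.

End BoundedOperators.

Section MarkovOperator.
Variables (R : realType) (G : groupType).
Implicit Types (f : G -> R[i]) (T : (G -> R[i]) -> (G -> R[i])).

(* Right translations permute coordinates, hence preserve the unit ball. *)
Lemma unit_ball_rho g f : unit_ball f -> unit_ball (rho g f).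
Proof.
move=> f_unit F F_uniq; rewrite /rho.
rewrite -(big_map (fun y => (y * g)%g) xpredT (fun z => `|f z| ^+ 2)).
by apply: f_unit; rewrite map_inj_uniq // => y z; apply: mulIg.
Qed.

Lemma rho1 f : rho 1%g f = f.
Proof. by apply: funext => y; rewrite /rho mulg1. Qed.

Lemma markov_eigen_coord_bound (mu : G -> R) T (lambda : R[i]) f x :
  (forall g, 0 <= mu g) -> hasSum mu 1 -> bounded_op T ->
  markov_eq mu T (fun f x => lambda * T f x) -> unit_ball f ->
  `|lambda - (mu 1%g)%:C| * `|T f x| <= ((1 - mu 1%g) * coord_sup T)%:C.
Proof.
move=> mu_ge0 mu_sum1 T_bdd hP f_unit.
have N_ge0 : 0 <= coord_sup T.
  exact: le_trans (normc_ge0 (T f x)) (coord_le_sup x T_bdd f_unit).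
have term_le g : g != 1%g ->
    `|(mu g)%:C * rho g (T (rho g^-1 f)) x| <= (mu g * coord_sup T)%:C.
  move=> _; rewrite normrM ger0_norm ?ler0c // rmorphM ler_wpM2l ?ler0c //.
  by rewrite norm_normc lecR /rho (coord_le_sup _ T_bdd (unit_ball_rho _ f_unit)).
have := hasSum_remainder_bound (hP f (unit_ball_l2 f_unit) x) mu_sum1 N_ge0 term_le.
by rewrite invg1 !rho1 -mulrBl normrM.
Qed.

End MarkovOperator.

Theorem theorem2p2 (R : realType) (G : groupType)
    (G_countable : exists e : nat -> G, forall g : G, exists n : nat, e n = g)
    (mu : G -> R) (mu_ge0 : forall g : G, 0 <= mu g) (mu_sum1 : hasSum mu 1)
    (mu_e : 0 < mu 1%g)
    (T : (G -> R[i]) -> (G -> R[i])) (T_bdd : bounded_op T)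
    (T_ne0 : ~ op_is_zero T)
    (lambda : R[i]) (lambda_T : `|lambda| = 1)
    (hP : markov_eq mu T (fun f x => lambda * T f x)) :
  lambda = 1.
Proof.
apply: (unit_circle_disc_eq1 mu_e lambda_T).
set a := mu 1%g; set d := normc (lambda - a%:C); set N := coord_sup T.
have N_gt0 : 0 < N := coord_sup_gt0 T_bdd T_ne0.
have coord_bound r : coord_values T r -> d * r <= (1 - a) * N.
  move=> [f [x [f_unit ->]]]; rewrite -lecR rmorphM /= -!norm_normc.
  exact: markov_eigen_coord_bound.
have [f [x [f_unit _]]] := nonzero_op_witness T_bdd T_ne0.
have dN_le : d * N <= (1 - a) * N.
  apply: scaled_sup_le coord_bound; last exact: normc_ge0.
  by exists (normc (T f x)), f, x.
by rewrite norm_normc lecR -(ler_pM2r N_gt0).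
Qed.
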